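(* Let ${\mathbf{w}}\in\mathbb{R}^d$, let $\boldsymbol{\Sigma}_1$ be a $d\times d$ covariance matrix, and let ${\boldsymbol{\mu}}_{\min}\le{\boldsymbol{\mu}}_{\max}$ be vectors in $\mathbb{R}^d$. Consider $$\max_{{\boldsymbol{\mu}}_1}\ \mathbb{E}_{{\mathbf{x}}\sim N({\boldsymbol{\mu}}_1,\boldsymbol{\Sigma}_1)}\big[-\log\big(\sigma({\mathbf{w}}^T{\mathbf{x}})\big)\big]\quad\text{s.t.}\quad {\boldsymbol{\mu}}_{\min}\le{\boldsymbol{\mu}}_1\le{\boldsymbol{\mu}}_{\max}.$$ Then an optimal solution ${\boldsymbol{\mu}}_1^*$ has the form ${\boldsymbol{\mu}}_1^*[i]={\boldsymbol{\mu}}_{\max}[i]$ if ${\mathbf{w}}[i]\le0$ and ${\boldsymbol{\mu}}_1^*[i]={\boldsymbol{\mu}}_{\min}[i]$ if ${\mathbf{w}}[i]>0$, for each $i=1,\dots,d$.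
   Context: $\sigma(t)=1/(1+e^{-t})$ is the logistic sigmoid; ${\mathbf{a}}[i]$ denotes the $i$-th entry of a vector ${\mathbf{a}}$; vector inequalities are entrywise. *)

From HB Require Import structures.
From mathcomp Require Import all_boot all_order all_algebra.
From mathcomp Require Import all_classical all_reals all_analysis.
Set Implicit Arguments. Unset Strict Implicit. Unset Printing Implicit Defensive.
Import Order.TTheory GRing.Theory Num.Theory.
Local Open Scope classical_set_scope.
Local Open Scope ring_scope.

Definition sigmoid {R : realType} (t : R) : R := 1 / (1 + expR (- t)).

Definition lincomb {R : realType} {n : nat} {T : Type}
  (a : 'rV[R]_n) (X : 'I_n -> T -> R) (w : T) : R :=
  \sum_(i < n) a ord0 i * X i w.

Definition normal_law {R : realType} (m v : R) : set R -> \bar R :=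
  if v == 0 then \d_m else normal_prob m (Num.sqrt v).

(* X is a multivariate normal random vector N(mu, Sigma) on (T, P):
   its coordinates are measurable and every linear combination a^T X
   has law N(a^T mu, a^T Sigma a) (standard definition of the
   multivariate Gaussian). *)
Definition is_gaussian_vector {R : realType} {n : nat} {d : measure_display}
  {T : measurableType d} (P : probability T R) (X : 'I_n -> T -> R)
  (mu : 'rV[R]_n) (Sigma : 'M[R]_n) : Prop :=
  (forall i, measurable_fun setT (X i)) /\
  forall a : 'rV[R]_n, forall A : set R, measurable A ->
    P (lincomb a X @^-1` A) =
    normal_law ((a *m mu^T) ord0 ord0) ((a *m Sigma *m a^T) ord0 ord0) A.

Definition covariance_matrix {R : realType} {n : nat} (S : 'M[R]_n) : Prop :=
  S^T = S /\ forall a : 'rV[R]_n, 0 <= (a *m S *m a^T) ord0 ord0.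

Definition logistic_loss_exp {R : realType} {n : nat} {d : measure_display}
  {T : measurableType d} (P : probability T R) (X : 'I_n -> T -> R)
  (w : 'rV[R]_n) : \bar R :=
  'E_P[fun t => - ln (sigmoid (lincomb w X t))].

Definition mu_star {R : realType} {n : nat} (w mu_min mu_max : 'rV[R]_n) : 'rV[R]_n :=
  \row_i (if w ord0 i <= 0 then mu_max ord0 i else mu_min ord0 i).

(* Writing Y := w^T x, the hypothesis on x says that Y ~ N(w^T mu_1, w^T Sigma_1 w),
   so the objective is E[g(Y)] with g(t) = -log sigma(t) = log(1 + e^(-t))
   nonnegative, continuous and nonincreasing.  Translating the Gaussian
   density, E[g(Y)] = E[g(Z + w^T mu_1)] with Z centered (or g(w^T mu_1) when
   w^T Sigma_1 w = 0), which is nonincreasing in the mean w^T mu_1.  Hence the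
   objective is maximal where w^T mu_1 is minimal on the box, i.e. at mu_1^*,
   chosen coordinatewise by the sign of w[i]. *)

From HB Require Import structures.
From mathcomp Require Import all_boot all_order all_algebra.
From mathcomp Require Import all_classical all_reals all_analysis.
From mathcomp Require Import measurable_realfun.
Import Order.TTheory GRing.Theory Num.Theory.
Local Open Scope classical_set_scope.
Local Open Scope ring_scope.
Import HBNNSimple.
Import numFieldNormedType.Exports.

Section integral_density.
Local Open Scope ereal_scope.
Context d (T : measurableType d) (R : realType).
Variables (mu nu : {measure set T -> \bar R}) (p : T -> R).
Hypotheses (mp : measurable_fun setT p) (p_ge0 : forall x, (0 <= p x)%R)
  (nuE : forall A, measurable A -> nu A = \int[mu]_(x in A) (p x)%:E).

Let integral_density_indic E : measurable E ->
  \int[nu]_x (\1_E x)%:E = \int[mu]_x ((\1_E x)%:E * (p x)%:E).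
Proof.
move=> mE; rewrite integral_indic// setIT nuE// integral_mkcond.
by apply: eq_integral => x _; rewrite patchE indicE; case: ifPn; rewrite ?mul1e ?mul0e.
Qed.

Let integral_density_nnsfun (f : {nnsfun T >-> R}) :
  \int[nu]_x (f x)%:E = \int[mu]_x ((f x)%:E * (p x)%:E).
Proof.
under [LHS]eq_integral do rewrite fimfunE -fsumEFin//.
rewrite [LHS]ge0_integral_fsum//; last 2 first.
  - by move=> r; exact/measurable_EFinP/measurableT_comp.
  - by move=> n x _; rewrite EFinM nnfun_muleindic_ge0.
under [RHS]eq_integral.
  move=> x _; rewrite fimfunE -fsumEFin// ge0_mule_fsuml; last first.
    by move=> r; rewrite EFinM nnfun_muleindic_ge0.
  over.
rewrite [RHS]ge0_integral_fsum//; last 2 first.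
  - move=> r; apply/measurable_EFinP/measurable_funM => //.
    exact/measurableT_comp.
  - by move=> n x _; rewrite EFinM mule_ge0 ?nnfun_muleindic_ge0 ?lee_fin.
apply: eq_fsbigr => _ /set_mem[t _ <-]; rewrite integralZl_indic_nnsfun//.
under [RHS]eq_integral do rewrite EFinM -muleA.
rewrite ge0_integralZl//.
- by rewrite integral_density_indic.
- exact/measurable_EFinP/measurable_funM.
- by move=> x _; rewrite mule_ge0// lee_fin.
- by rewrite lee_fin.
Qed.

Lemma ge0_integral_density (f : T -> \bar R) :
  measurable_fun setT f -> (forall x, 0 <= f x) ->
  \int[nu]_x f x = \int[mu]_x (f x * (p x)%:E).
Proof.
move=> mf f_ge0; pose f_ := nnsfun_approx measurableT mf.
have f_nd x : {homo f_^~ x : m n / (m <= n)%N >-> (m <= n)%R}.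
  by move=> m n mn; exact/lefP/nd_nnsfun_approx.
transitivity (lim (\int[nu]_x (f_ n x)%:E @[n --> \oo])).
  rewrite -monotone_convergence//=.
  - apply: eq_integral => x _; apply/esym/cvg_lim => //.
    exact: cvg_nnsfun_approx.
  - by move=> n; exact/measurable_EFinP/measurable_funTS.
  - by move=> n x _; rewrite lee_fin.
  - by move=> x _ m n mn; rewrite lee_fin f_nd.
under eq_fun do rewrite integral_density_nnsfun.
rewrite -monotone_convergence//=.
- apply: eq_integral => x _; apply/cvg_lim => //.
  by apply: cvgeZr => //; exact: cvg_nnsfun_approx.
- by move=> n; apply/measurable_EFinP/measurable_funM.
- by move=> n x _; rewrite mule_ge0// lee_fin.
- by move=> x _ m n mn; rewrite lee_wpmul2r ?lee_fin ?f_nd.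
Qed.

End integral_density.

Section neg_log_sigmoid.
Context {R : realType}.

Definition neg_log_sigmoid (t : R) : R := - ln (sigmoid t).

Lemma neg_log_sigmoidE t : neg_log_sigmoid t = ln (1 + expR (- t)).
Proof.
by rewrite /neg_log_sigmoid /sigmoid div1r lnV ?opprK// posrE addr_gt0 ?expR_gt0.
Qed.

Lemma neg_log_sigmoid_ge0 t : 0 <= neg_log_sigmoid t.
Proof. by rewrite neg_log_sigmoidE ln_ge0// lerDl expR_ge0. Qed.

Lemma neg_log_sigmoid_nonincreasing : {homo neg_log_sigmoid : s t /~ s <= t}.
Proof.
move=> s t st; rewrite !neg_log_sigmoidE ler_ln ?posrE ?addr_gt0 ?expR_gt0//.
by rewrite lerD2l ler_expR lerN2.
Qed.

Lemma continuous_neg_log_sigmoid : continuous neg_log_sigmoid.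
Proof.
move=> t; rewrite (_ : neg_log_sigmoid = @ln R \o (fun t => 1 + expR (- t))); last first.
  by apply/funext => s; rewrite neg_log_sigmoidE.
apply: continuous_comp; last exact/continuous_ln/addr_gt0/expR_gt0.
apply: continuousD; first exact: cst_continuous.
apply: continuous_comp; [exact: opp_continuous | exact: continuous_expR].
Qed.

End neg_log_sigmoid.

Section normal_integral.
Context {R : realType}.
Local Notation mu := (@lebesgue_measure R).

Lemma continuous_ge0_integral_shift (G : R -> R) (m : R) :
  continuous G -> (forall x, 0 <= G x) ->
  (\int[mu]_x (G x)%:E = \int[mu]_y (G (y + m))%:E)%E.
Proof.
move=> cG G_ge0.
have shift'E : (fun y : R => y + m)^`()%classic = cst 1.
  by apply/funext => y; rewrite derive1E deriveD// derive_id derive_cst addr0.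
rewrite (@increasing_ge0_integration_by_substitutionT _ (fun y => y + m)) //.
- by apply: eq_integral => y _; rewrite shift'E /= mulr1.
- by move=> x y; rewrite ltrD2r.
- by rewrite shift'E; exact: cst_continuous.
- by rewrite shift'E; exact: is_cvg_cst.
- by rewrite shift'E; exact: is_cvg_cst.
- exact: cvg_addrr_Ny.
- exact: cvg_addrr.
Qed.

Lemma normal_pdf_shift (m s y : R) : s != 0 ->
  normal_pdf m s (y + m) = normal_pdf 0 s y.
Proof.
move=> s0; rewrite /normal_pdf (negbTE s0) normal_fun_center [in RHS]normal_fun_center.
by rewrite /= addrK subr0.
Qed.

Lemma ge0_integral_normal_prob (m s : R) (g : R -> R) :
  s != 0 -> continuous g -> (forall x, 0 <= g x) ->
  (\int[normal_prob m s]_x (g x)%:E =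
   \int[mu]_y (g (y + m) * normal_pdf 0 s y)%:E)%E.
Proof.
move=> s0 cg g_ge0.
rewrite (@ge0_integral_density _ _ _ mu _ _ (measurable_normal_pdf m s)
  (normal_pdf_ge0 m s)) //; last first.
  by apply/measurable_EFinP; exact: continuous_measurable_fun.
under eq_integral do rewrite -EFinM.
rewrite (continuous_ge0_integral_shift _ m).
- by apply: eq_integral => y _; rewrite normal_pdf_shift.
- by move=> x; apply: continuousM; [exact: cg | exact: continuous_normal_pdf].
- by move=> x; rewrite mulr_ge0 ?normal_pdf_ge0.
Qed.

Lemma le_ge0_integral_normal_prob (m1 m2 s : R) (g : R -> R) :
  s != 0 -> continuous g -> (forall x, 0 <= g x) -> {homo g : x y /~ x <= y} ->
  m2 <= m1 ->
  (\int[normal_prob m1 s]_x (g x)%:E <= \int[normal_prob m2 s]_x (g x)%:E)%E.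
Proof.
move=> s0 cg g_ge0 g_nonincr m21; rewrite !ge0_integral_normal_prob//.
have mg := continuous_measurable_fun cg.
apply: ge0_le_integral => //.
- by move=> y _; rewrite lee_fin mulr_ge0 ?normal_pdf_ge0.
- apply/measurable_EFinP/measurable_funM; last exact: measurable_normal_pdf.
  exact/measurableT_comp/measurable_funD.
- apply/measurable_EFinP/measurable_funM; last exact: measurable_normal_pdf.
  exact/measurableT_comp/measurable_funD.
- by move=> y _; rewrite lee_fin ler_wpM2r ?normal_pdf_ge0 ?g_nonincr ?lerD2l.
Qed.

End normal_integral.

Section normal_law_transfer.
Context {R : realType} {d : measure_display} {T : measurableType d}
  {P : probability T R} {Y : T -> R} {m v : R}.
Hypotheses (mY : measurable_fun setT Y)
  (Y_law : forall A, measurable A -> P (Y @^-1` A) = normal_law m v A).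

(* The laws of real random variables live on [measurableTypeR R], the
   Lebesgue sigma-algebra carrying [normal_prob] and [lebesgue_measure]. *)
Let Y' : T -> measurableTypeR R := Y.

Let ge0_integral_comp_pushforward (g : R -> R) :
  measurable_fun setT g -> (forall x, 0 <= g x) ->
  (\int[P]_t (g (Y t))%:E = \int[pushforward P Y']_y (g y)%:E)%E.
Proof.
move=> mg g_ge0; rewrite ge0_integral_pushforward //.
- exact/measurable_EFinP.
- by move=> y _; rewrite lee_fin.
Qed.

Lemma ge0_integral_normal_law0_comp (g : R -> R) :
  v = 0 -> measurable_fun setT g -> (forall x, 0 <= g x) ->
  (\int[P]_t (g (Y t))%:E = (g m)%:E)%E.
Proof.
move=> v0 mg g_ge0; rewrite ge0_integral_comp_pushforward //.
rewrite (eq_measure_integral (@dirac _ (measurableTypeR R) m R)) => [|A mA _].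
  by rewrite integral_dirac ?diracT ?mul1e //; exact/measurable_EFinP.
by have := Y_law; rewrite /normal_law v0 eqxx; apply.
Qed.

Lemma ge0_integral_normal_law_comp (g : R -> R) :
  v != 0 -> measurable_fun setT g -> (forall x, 0 <= g x) ->
  (\int[P]_t (g (Y t))%:E = \int[normal_prob m (Num.sqrt v)]_x (g x)%:E)%E.
Proof.
move=> v0 mg g_ge0; rewrite ge0_integral_comp_pushforward //.
apply: eq_measure_integral => A mA _.
by have := Y_law; rewrite /normal_law (negbTE v0); apply.
Qed.

End normal_law_transfer.

Lemma le_ge0_integral_normal_law_comp {R : realType}
    {d1 d2 : measure_display} {T1 : measurableType d1} {T2 : measurableType d2}
    {P1 : probability T1 R} {P2 : probability T2 R} {Y1 : T1 -> R} {Y2 : T2 -> R}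
    {m1 m2 v : R} (g : R -> R) :
  measurable_fun setT Y1 -> measurable_fun setT Y2 ->
  (forall A, measurable A -> P1 (Y1 @^-1` A) = normal_law m1 v A) ->
  (forall A, measurable A -> P2 (Y2 @^-1` A) = normal_law m2 v A) ->
  0 <= v -> m2 <= m1 ->
  continuous g -> (forall x, 0 <= g x) -> {homo g : x y /~ x <= y} ->
  (\int[P1]_t (g (Y1 t))%:E <= \int[P2]_t (g (Y2 t))%:E)%E.
Proof.
move=> mY1 mY2 Y1_law Y2_law v_ge0 m21 cg g_ge0 g_nonincr.
have mg := continuous_measurable_fun cg.
have [v0|v0] := eqVneq v 0.
  rewrite (ge0_integral_normal_law0_comp mY1 Y1_law _ v0 mg g_ge0).
  rewrite (ge0_integral_normal_law0_comp mY2 Y2_law _ v0 mg g_ge0).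
  by rewrite lee_fin g_nonincr.
rewrite (ge0_integral_normal_law_comp mY1 Y1_law _ v0 mg g_ge0).
rewrite (ge0_integral_normal_law_comp mY2 Y2_law _ v0 mg g_ge0).
by apply: le_ge0_integral_normal_prob; rewrite // sqrtr_eq0 -ltNge lt_def v0.
Qed.

Lemma measurable_lincomb {R : realType} {n : nat} {d : measure_display}
    {T : measurableType d} (a : 'rV[R]_n) {X : 'I_n -> T -> R} :
  (forall i, measurable_fun setT (X i)) -> measurable_fun setT (lincomb a X).
Proof. by move=> mX; apply: measurable_sum => i; exact: measurable_funM. Qed.

Lemma logistic_loss_expE {R : realType} {n : nat} {d : measure_display}
    {T : measurableType d} (P : probability T R) (X : 'I_n -> T -> R) (w : 'rV[R]_n) :
  logistic_loss_exp P X w = (\int[P]_t (neg_log_sigmoid (lincomb w X t))%:E)%E.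
Proof. by rewrite /logistic_loss_exp unlock. Qed.

Section box_constraint.
Context {R : realType} {n : nat}.
Variables (w mu_min mu_max : 'rV[R]_n).

Lemma mu_star_in_box : (forall i, mu_min ord0 i <= mu_max ord0 i) ->
  forall i, mu_min ord0 i <= mu_star w mu_min mu_max ord0 i <= mu_max ord0 i.
Proof. by move=> le_min_max i; rewrite mxE; case: ifP; rewrite lexx le_min_max. Qed.

Lemma mu_star_mean_le (mu : 'rV[R]_n) :
  (forall i, mu_min ord0 i <= mu ord0 i <= mu_max ord0 i) ->
  (w *m (mu_star w mu_min mu_max)^T) ord0 ord0 <= (w *m mu^T) ord0 ord0.
Proof.
move=> mu_box; rewrite !mxE; apply: ler_sum => i _; rewrite !mxE.
have /andP[le_min le_max] := mu_box i.
case: ifPn => [w_le0|]; first exact: ler_wnM2l.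
by rewrite -ltNge => /ltW w_ge0; exact: ler_wpM2l.
Qed.

End box_constraint.

Theorem theorem5 (R : realType) (n : nat) (w : 'rV[R]_n) (Sigma : 'M[R]_n)
  (mu_min mu_max : 'rV[R]_n) :
  covariance_matrix Sigma ->
  (forall i, mu_min ord0 i <= mu_max ord0 i) ->
  (forall i, mu_min ord0 i <= mu_star w mu_min mu_max ord0 i <= mu_max ord0 i) /\
  forall (mu1 : 'rV[R]_n),
    (forall i, mu_min ord0 i <= mu1 ord0 i <= mu_max ord0 i) ->
  forall (d1 : measure_display) (T1 : measurableType d1) (P1 : probability T1 R)
    (X1 : 'I_n -> T1 -> R),
    is_gaussian_vector P1 X1 mu1 Sigma ->
  forall (d2 : measure_display) (T2 : measurableType d2) (P2 : probability T2 R)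
    (X2 : 'I_n -> T2 -> R),
    is_gaussian_vector P2 X2 (mu_star w mu_min mu_max) Sigma ->
    (logistic_loss_exp P1 X1 w <= logistic_loss_exp P2 X2 w)%E.
Proof.
move=> [_ Sigma_psd] le_min_max; split; first exact: mu_star_in_box.
move=> mu1 mu1_box d1 T1 P1 X1 [mX1 X1_law] d2 T2 P2 X2 [mX2 X2_law].
rewrite !logistic_loss_expE.
apply: (le_ge0_integral_normal_law_comp _ (measurable_lincomb w mX1)
  (measurable_lincomb w mX2) (X1_law w) (X2_law w)).
- exact: Sigma_psd.
- exact: mu_star_mean_le.
- exact: continuous_neg_log_sigmoid.
- exact: neg_log_sigmoid_ge0.
- exact: neg_log_sigmoid_nonincreasing.
Qed.
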